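(* For every $X\in\mathfrak{W}'$ and every $l\ge1$, $\lambda(X)L_{z_l}-L_{z_l}\lambda(X)=XL_{z_l}+L_{x^l}X$ as maps on $\mathfrak{H}^1$.
   Context: Let $\mathfrak{H}=\mathbb{Q}\langle x,y\rangle$, $\mathfrak{H}^1=\mathbb{Q}+\mathfrak{H}y$, $\mathfrak{H}^1_n$ its homogeneous part of degree $n$; $L_w(w')=ww'$; products of operators denote composition. Let $z_k=x^{k-1}y$. The harmonic product $\ast$ on $\mathfrak{H}^1$ is the $\mathbb{Q}$-bilinear map with $1\ast w=w\ast1=w$ and $z_kw\ast z_lw'=z_k(w\ast z_lw')+z_l(z_kw\ast w')+z_{k+l}(w\ast w')$; $\mathcal{H}_w(v)=w\ast v$. $\mathfrak{W}$ is the $\mathbb{Q}$-span of the operators $\mathcal{H}_w$ ($w\in\mathfrak{H}^1$) on $\mathfrak{H}^1$; $\mathfrak{W}'$ is the $\mathbb{Q}$-span of the operators $L_{z_k}\mathcal{H}_w$ ($k\ge1$, $w\in\mathfrak{H}^1$) on $\mathfrak{H}^1$. The $L_{z_k}\mathcal{H}_w$ over distinct pairs $(k,w)$, $w$ a word, are linearly independent, and $\lambda:\mathfrak{W}'\to\mathfrak{W}$ is the $\mathbb{Q}$-linear map with $\lambda(L_{z_k}\mathcal{H}_w)=\mathcal{H}_{z_kw}$. *)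

From HB Require Import structures.
From mathcomp Require Import all_boot all_order all_algebra.
Set Implicit Arguments. Unset Strict Implicit. Unset Printing Implicit Defensive.
Import Order.TTheory GRing.Theory Num.Theory.
Local Open Scope ring_scope.

(* Words in the letters x, y: [false] = x, [true] = y. *)
Definition word := seq bool.

(* Elements of H = Q<x,y> are represented as formal finite Q-linear
   combinations of words; two representatives denote the same element iff
   they have the same coefficient at every word. *)
Definition hpoly := seq (rat * word).

Definition coef (p : hpoly) (u : word) : rat := \sum_(e <- p | e.2 == u) e.1.

Definition peq (p q : hpoly) : Prop := forall u, coef p u = coef q u.

Definition padd (p q : hpoly) : hpoly := p ++ q.
Definition pscale (c : rat) (p : hpoly) : hpoly := [seq (c * e.1, e.2) | e <- p].
Definition psub (p q : hpoly) : hpoly := padd p (pscale (-1) q).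

(* words of H^1 = Q + H y : empty or ending with y *)
Definition wordH1 (w : word) : bool := (w == [::]) || last false w.
Definition inH1 (p : hpoly) : bool := all (fun e => wordH1 e.2) p.

Definition z (k : nat) : word := rcons (nseq k.-1 false) true.
Definition xpow (l : nat) : word := nseq l false.

(* Decomposition of a word of H^1 into its z-letters: w = z_{k1} ... z_{kr} *)
Fixpoint zdec_aux (n : nat) (w : word) : seq nat :=
  match w with
  | [::] => [::]
  | false :: w' => zdec_aux n.+1 w'
  | true :: w' => n.+1 :: zdec_aux 0 w'
  end.
Definition zdec (w : word) : seq nat := zdec_aux 0 w.
Definition zword (s : seq nat) : word := flatten [seq z k | k <- s].

(* Harmonic product on z-words, by the defining recursion
   z_k w * z_l w' = z_k (w * z_l w') + z_l (z_k w * w') + z_(k+l) (w * w'). *)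
Definition consz (k : nat) (p : seq (rat * seq nat)) : seq (rat * seq nat) :=
  [seq (e.1, k :: e.2) | e <- p].

Fixpoint stuffle (a : seq nat) : seq nat -> seq (rat * seq nat) :=
  match a with
  | [::] => fun b => [:: (1, b)]
  | k :: a' =>
      fix st2 (b : seq nat) : seq (rat * seq nat) :=
        match b with
        | [::] => [:: (1, a)]
        | l :: b' => consz k (stuffle a' b) ++ consz l (st2 b')
                       ++ consz (k + l)%N (stuffle a' b')
        end
  end.

Definition harmw (u v : word) : hpoly :=
  [seq (e.1, zword e.2) | e <- stuffle (zdec u) (zdec v)].

Definition op := hpoly -> hpoly.
Definition Lop (w : word) : op := fun p => [seq (e.1, w ++ e.2) | e <- p].
Definition Hop (w : word) : op :=
  fun p => flatten [seq pscale e.1 (harmw w e.2) | e <- p].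

(* An element of W' given as a finite Q-linear combination
   sum_i c_i L_{z_{k_i}} H_{w_i}, with k_i >= 1 and w_i a word of H^1. *)
Definition Wcomb := seq (rat * nat * word).
Definition validW (X : Wcomb) : bool :=
  all (fun t => (0 < t.1.2)%N && wordH1 t.2) X.

Definition Wop (X : Wcomb) : op :=
  fun p => flatten [seq pscale t.1.1 (Lop (z t.1.2) (Hop t.2 p)) | t <- X].

Definition lambda (X : Wcomb) : op :=
  fun p => flatten [seq pscale t.1.1 (Hop (z t.1.2 ++ t.2) p) | t <- X].

From HB Require Import structures.
From mathcomp Require Import all_boot all_order all_algebra.
From mathcomp Require Import ring.
Import GRing.Theory.

(* Both sides of the identity are Q-linear in X, so it suffices to treat a
   single generator X = L_{z_k} H_w, i.e. lambda(X) = H_{z_k w}.  Comparing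
   coefficients, and using linearity in v, this reduces further to a single
   word v, where the claim

     (z_k w) * (z_l v) = z_l ((z_k w) * v) + z_k (w * z_l v) + x^l z_k (w * v)

   is the defining recursion of the harmonic product, rewritten with
   z_{k+l} = x^l z_k. *)

Local Open Scope ring_scope.

(* The coefficient map is additive in the representative and commutes with
   scaling: this is what lets every identity be checked word by word. *)
Lemma coef_nil (u : word) : coef [::] u = 0.
Proof. by rewrite /coef big_nil. Qed.

Lemma coef_cat (p q : hpoly) (u : word) : coef (p ++ q) u = coef p u + coef q u.
Proof. by rewrite /coef big_cat. Qed.

Lemma coef_scale (c : rat) (p : hpoly) (u : word) :
  coef (pscale c p) u = c * coef p u.
Proof. by rewrite /coef big_map mulr_sumr. Qed.

Lemma pscale_cat (c : rat) (p q : hpoly) :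
  pscale c (p ++ q) = pscale c p ++ pscale c q.
Proof. by rewrite /pscale map_cat. Qed.

Lemma Lop_cat (w : word) (p q : hpoly) : Lop w (p ++ q) = Lop w p ++ Lop w q.
Proof. by rewrite /Lop map_cat. Qed.

Lemma Lop_scale (w : word) (c : rat) (p : hpoly) :
  Lop w (pscale c p) = pscale c (Lop w p).
Proof. by rewrite /Lop /pscale -!map_comp. Qed.

Lemma Lop_Lop (a b : word) (p : hpoly) : Lop a (Lop b p) = Lop (a ++ b) p.
Proof. by rewrite /Lop -map_comp; apply: eq_map => e /=; rewrite catA. Qed.

Lemma Hop_cons (w : word) (c : rat) (v : word) (p : hpoly) :
  Hop w ((c, v) :: p) = pscale c (harmw w v) ++ Hop w p.
Proof. by []. Qed.

Lemma lambda_cons (c : rat) (k : nat) (w : word) (X : Wcomb) (p : hpoly) :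
  lambda ((c, k, w) :: X) p = pscale c (Hop (z k ++ w) p) ++ lambda X p.
Proof. by []. Qed.

Lemma Wop_cons (c : rat) (k : nat) (w : word) (X : Wcomb) (p : hpoly) :
  Wop ((c, k, w) :: X) p = pscale c (Lop (z k) (Hop w p)) ++ Wop X p.
Proof. by []. Qed.

(* A block of m letters x followed by y is read as the letter z_(n+m+1),
   where n counts the x's already pending. *)
Lemma zdec_aux_nseq (n m : nat) (w : word) :
  zdec_aux n (nseq m false ++ true :: w) = (n + m).+1%N :: zdec_aux 0 w.
Proof.
elim: m n => [|m IH] n /=; first by rewrite addn0.
by rewrite IH addnS.
Qed.

Lemma zdec_z (k : nat) (w : word) : (0 < k)%N -> zdec (z k ++ w) = k :: zdec w.
Proof.
move=> hk; rewrite /zdec /z -cats1 -catA /= zdec_aux_nseq add0n.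
by rewrite prednK.
Qed.

(* z_(k+l) = x^l z_k, the source of the term L_{x^l} X. *)
Lemma z_add (k l : nat) : (0 < k)%N -> z (k + l) = xpow l ++ z k.
Proof.
move=> hk; rewrite /z /xpow -!cats1 catA -nseqD; congr (nseq _ _ ++ _).
by case: k hk => // k _; rewrite addSn /= addnC.
Qed.

Lemma zword_consz (k : nat) (s : seq (rat * seq nat)) :
  [seq (e.1, zword e.2) | e <- consz k s] = Lop (z k) [seq (e.1, zword e.2) | e <- s].
Proof. by rewrite /consz /Lop -!map_comp. Qed.

Lemma harmw_z_z (k l : nat) (w v : word) : (0 < k)%N -> (0 < l)%N ->
  harmw (z k ++ w) (z l ++ v) =
  Lop (z k) (harmw w (z l ++ v)) ++ Lop (z l) (harmw (z k ++ w) v)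
      ++ Lop (xpow l ++ z k) (harmw w v).
Proof.
by move=> hk hl; rewrite /harmw !zdec_z //= !map_cat !zword_consz -z_add.
Qed.

Lemma lambda_gen_Lz (k l : nat) (w : word) (v : hpoly) (u : word) :
  (0 < k)%N -> (0 < l)%N ->
  coef (Hop (z k ++ w) (Lop (z l) v)) u =
  coef (Lop (z l) (Hop (z k ++ w) v)) u
  + coef (Lop (z k) (Hop w (Lop (z l) v))) u
  + coef (Lop (xpow l) (Lop (z k) (Hop w v))) u.
Proof.
move=> hk hl; elim: v => [|[c v0] v IH]; first by rewrite !coef_nil !addr0.
rewrite /= -/(Lop _ _) !Hop_cons harmw_z_z //.
rewrite !pscale_cat !Lop_cat !Lop_scale !Lop_Lop !coef_cat !coef_scale IH.
rewrite !Lop_Lop; ring.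
Qed.

Theorem mainTheorem11 (X : Wcomb) (l : nat) :
  validW X -> (0 < l)%N ->
  forall v : hpoly, inH1 v ->
    peq (psub (lambda X (Lop (z l) v)) (Lop (z l) (lambda X v)))
        (padd (Wop X (Lop (z l) v)) (Lop (xpow l) (Wop X v))).
Proof.
(* The identity holds for every representative v, not only those in H^1;
   it is linear in X, so it is checked generator by generator. *)
move=> hX hl v _ u.
suff lambda_Lz : coef (lambda X (Lop (z l) v)) u =
  coef (Lop (z l) (lambda X v)) u
  + coef (Wop X (Lop (z l) v)) u + coef (Lop (xpow l) (Wop X v)) u.
  by rewrite /psub /padd !coef_cat coef_scale lambda_Lz; ring.
elim: X hX => [|[[c k] w] X IH]; first by rewrite !coef_nil !addr0.
case/andP => /andP [hk _] hX.
rewrite !lambda_cons !Wop_cons !Lop_cat !Lop_scale !coef_cat !coef_scale.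
by rewrite IH // lambda_gen_Lz // !Lop_Lop; ring.
Qed.
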